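(* With $S$ and $T$ as in the context, $p_S\ge p_T/2$.
   Context: Barycentric subdivisions: $T_0$ is an equilateral triangle with vertices $v_0,v_1,v_2$. $T_n$ is obtained by subdividing every triangular face $\{x,y,z\}$ of $T_{n-1}$ into the six triangles $\{x,m_{xy},c\},\{m_{xy},y,c\},\{y,m_{yz},c\},\{m_{yz},z,c\},\{z,m_{zx},c\},\{m_{zx},x,c\}$, where $m_{uv}$ are side midpoints and $c$ is the barycenter. As a simple graph, $T_n$ has the vertices of this triangulation and the sides of its faces as edges. Non-p.c.f. Sierpinski gasket: $S_0=T_0$. $S_n$ is obtained from $S_{n-1}$ by replacing each triangle $\{x,y,z\}$ of $S_{n-1}$, with its own three edges, by new vertices $m_{xy},m_{yz},m_{zx},c$ private to that triangle and the same six triangles, each carrying its own three edges. Thus distinct triangles have disjoint edge sets. $S$ and $T$ denote the limits. Bond percolation with parameter $p$: each edge receives an i.i.d. uniform $[0,1]$ label and is open if the label is $<p$. For $G\in\{S,T\}$ with approximations $G_n$, $p_G=\sup\{p\in[0,1]:\mathbb{P}_p(\text{there is an open path from } v_0 \text{ to } v_1 \text{ in } G_n)\to0 \text{ as } n\to\infty\}$. *)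

From HB Require Import structures.
From mathcomp Require Import all_boot all_order all_algebra.
From mathcomp Require Import all_classical all_reals all_analysis.
From Stdlib Require Import Relations.
Set Implicit Arguments. Unset Strict Implicit. Unset Printing Implicit Defensive.
Import Order.TTheory GRing.Theory Num.Theory.
Import numFieldNormedType.Exports.
Local Open Scope classical_set_scope.
Local Open Scope ring_scope.

(* The edges are the entries of [es] (two entries of the list are distinct
   edges even if they join the same vertices).  A configuration assigns to
   every edge "open" (true) or "closed" (false). *)

Section Perco.
Variable V : eqType.

Definition edge_at (es : seq (V * V)) (i : 'I_(size es)) : V * V :=
  tnth (in_tuple es) i.

Definition open_adj (es : seq (V * V)) (w : {ffun 'I_(size es) -> bool})
  (u v : V) : Prop :=
  exists i : 'I_(size es), w i /\ (edge_at i = (u, v) \/ edge_at i = (v, u)).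

Definition open_conn (es : seq (V * V)) (w : {ffun 'I_(size es) -> bool})
  (a b : V) : Prop :=
  clos_refl_trans V (open_adj w) a b.

(* P_p(open path from a to b), edges independently open with probability p
   (equivalently: i.i.d. uniform[0,1] labels, open iff label < p). *)
Definition conn_prob (R : realType) (p : R) (es : seq (V * V)) (a b : V) : R :=
  \sum_(w : {ffun 'I_(size es) -> bool})
     (\prod_(i : 'I_(size es)) (if w i then p else 1 - p)) *
     (if `[< open_conn w a b >] then 1 else 0).

Definition crit_param (R : realType) (E : nat -> seq (V * V)) (a b : V) : R :=
  sup [set p : R | (0 <= p <= 1) /\
        ((fun n => conn_prob p (E n) a b) @ \oo --> (0 : R))].
End Perco.

Definition tri_sides (V : Type) (t : V * V * V) : seq (V * V) :=
  let: (x, y, z) := t in [:: (x, y); (y, z); (z, x)].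

(* Vertices are points of the plane in barycentric coordinates w.r.t. the
   equilateral triangle (v0, v1, v2); geometrically equal points are the same
   vertex of the triangulation. *)
Definition pt := (rat * rat * rat)%type.
Definition ptT0 : pt := (1, 0, 0).
Definition ptT1 : pt := (0, 1, 0).
Definition ptT2 : pt := (0, 0, 1).

Definition midpt (x y : pt) : pt :=
  ((x.1.1 + y.1.1) / 2%:R, (x.1.2 + y.1.2) / 2%:R, (x.2 + y.2) / 2%:R).
Definition bary (x y z : pt) : pt :=
  ((x.1.1 + y.1.1 + z.1.1) / 3%:R, (x.1.2 + y.1.2 + z.1.2) / 3%:R,
   (x.2 + y.2 + z.2) / 3%:R).

Definition bsubdiv (t : pt * pt * pt) : seq (pt * pt * pt) :=
  let: (x, y, z) := t in
  let c := bary x y z in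
  let mxy := midpt x y in let myz := midpt y z in let mzx := midpt z x in
  [:: (x, mxy, c); (mxy, y, c); (y, myz, c); (myz, z, c);
      (z, mzx, c); (mzx, x, c)].

Definition T_faces (n : nat) : seq (pt * pt * pt) :=
  iter n (fun F => flatten (map bsubdiv F)) [:: (ptT0, ptT1, ptT2)].

(* remove repeated edges (in either orientation): T_n is a simple graph *)
Fixpoint dedup_edges (V : eqType) (es : seq (V * V)) : seq (V * V) :=
  if es is e :: es' then
    if (e \in es') || ((e.2, e.1) \in es') then dedup_edges es'
    else e :: dedup_edges es'
  else [::].

Definition T_edges (n : nat) : seq (pt * pt) :=
  dedup_edges (flatten (map (@tri_sides pt) (T_faces n))).

(* Vertices: [inl i] is the original vertex v_i; [inr (w, k)] is the k-th new
   vertex (k = 0,1,2: midpoints m_xy, m_yz, m_zx; k = 3: barycenter) created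
   when subdividing the triangle with address w.  New vertices are thus
   private to the triangle being subdivided.  Each triangle carries its own
   three edges, so edges of distinct triangles are distinct (multigraph). *)
Definition svert := (nat + (seq nat * nat))%type.
Definition stri := (seq nat * (svert * svert * svert))%type.

Definition ssubdiv (t : stri) : seq stri :=
  let: (w, (x, y, z)) := t in
  let mxy : svert := inr (w, 0%N) in let myz : svert := inr (w, 1%N) in
  let mzx : svert := inr (w, 2%N) in let c : svert := inr (w, 3%N) in
  [:: (rcons w 0%N, (x, mxy, c)); (rcons w 1%N, (mxy, y, c));
      (rcons w 2%N, (y, myz, c)); (rcons w 3%N, (myz, z, c));
      (rcons w 4%N, (z, mzx, c)); (rcons w 5%N, (mzx, x, c))].

Definition S_tris (n : nat) : seq stri :=
  iter n (fun F => flatten (map ssubdiv F))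
    [:: ([::], (inl 0%N, inl 1%N, inl 2%N))].

Definition S_edges (n : nat) : seq (svert * svert) :=
  flatten (map (fun t : stri => tri_sides t.2) (S_tris n)).

Definition p_T (R : realType) : R := crit_param R T_edges ptT0 ptT1.
Definition p_S (R : realType) : R :=
  crit_param R S_edges (inl 0%N : svert) (inl 1%N).

(* Sending each vertex of S_n to its position in the plane maps every edge of
   S_n onto an edge of T_n.  The faces of T_n are nondegenerate triangles with
   disjoint interiors, and three such triangles cannot share a side (two of
   their third vertices lie on the same side of it), so every edge of T_n is
   the image of at most two edges of S_n.  Declaring an edge of T_n open when
   one of its preimages is open, and otherwise opening it independently so as
   to reach probability 2p, is a monotone coupling; hence
   P_p(v0 <-> v1 in S_n) <= P_2p(v0 <-> v1 in T_n) and p_S >= p_T / 2. *)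

From mathcomp Require Import all_boot all_order all_algebra.
From mathcomp Require Import all_classical all_reals all_analysis.
From mathcomp Require Import ring lra.
From Stdlib Require Import Relations.
Set Implicit Arguments. Unset Strict Implicit. Unset Printing Implicit Defensive.
Import Order.TTheory GRing.Theory Num.Theory.
Local Open Scope ring_scope.

Section BernoulliMean.
Variable R : realFieldType.
Implicit Types (ps qs : seq R) (p : R) (G H : seq bool -> R) (bs v : seq bool).

Fixpoint Ebern ps G : R :=
  if ps is p :: ps' then
    p * Ebern ps' (fun bs => G (true :: bs)) +
    (1 - p) * Ebern ps' (fun bs => G (false :: bs))
  else G [::].

Definition probs ps := all (fun q => 0 <= q <= 1) ps.

Definition bit_monotone G :=
  forall bs j, G (set_nth false bs j false) <= G (set_nth false bs j true).

Lemma eq_Ebern ps G H : G =1 H -> Ebern ps G = Ebern ps H.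
Proof.
elim: ps G H => [|p ps IH] G H GH /=; first exact: GH.
by congr (_ * _ + _ * _); apply: IH => bs; apply: GH.
Qed.

Lemma Ebern_cst ps c : Ebern ps (fun _ => c) = c.
Proof. by elim: ps => [|p ps IH] //=; rewrite !IH; ring. Qed.

Lemma ler_Ebern ps G H : probs ps -> (forall bs, G bs <= H bs) ->
  Ebern ps G <= Ebern ps H.
Proof.
elim: ps G H => [|p ps IH] G H /=; first by move=> _; apply.
move=> /andP[/andP[p0 p1] ok] GH.
have p1' : 0 <= 1 - p by rewrite subr_ge0.
by apply: lerD; apply: ler_wpM2l => //; apply: IH.
Qed.

Lemma Ebern_nseq0 n G : Ebern (nseq n 0) G = G (nseq n false).
Proof. by elim: n G => [|n IH] G //=; rewrite !IH mul0r add0r subr0 mul1r. Qed.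

Lemma Ebern_set_nth ps G j : (j < size ps)%N ->
  Ebern ps G = nth 0 ps j * Ebern ps (fun bs => G (set_nth false bs j true)) +
               (1 - nth 0 ps j) * Ebern ps (fun bs => G (set_nth false bs j false)).
Proof.
elim: ps G j => [|p ps IH] G [|j] //= hj.
  by set X := Ebern ps _; set Y := Ebern ps _; ring.
by rewrite (IH (fun bs => G (true :: bs)) j hj) (IH (fun bs => G (false :: bs)) j hj); ring.
Qed.

Lemma Ebern_set_nth_irrelevant ps G j x b : (j < size ps)%N ->
  Ebern (set_nth 0 ps j x) (fun bs => G (set_nth false bs j b)) =
  Ebern ps (fun bs => G (set_nth false bs j b)).
Proof.
elim: ps G j => [|p ps IH] G [|j] //= hj; first by set X := Ebern ps _; ring.
by rewrite (IH (fun bs => G (true :: bs)) j hj) (IH (fun bs => G (false :: bs)) j hj).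
Qed.

(* Forcing bit [j] open with probability [r] is dominated by raising its
   own probability by [r]: the difference is [r * q_j * (A - B) >= 0]. *)
Lemma Ebern_raise qs G j r : probs qs -> bit_monotone G -> (j < size qs)%N ->
  0 <= r ->
  r * Ebern qs (fun bs => G (set_nth false bs j true)) + (1 - r) * Ebern qs G <=
  Ebern (set_nth 0 qs j (nth 0 qs j + r)) G.
Proof.
move=> qs_ok Gmono hj r0.
have hj' : (j < size (set_nth 0%R qs j (nth 0%R qs j + r)%R))%N.
  by rewrite size_set_nth; apply: leq_trans (leq_maxr _ _).
rewrite (Ebern_set_nth G hj) (Ebern_set_nth G hj') !Ebern_set_nth_irrelevant //.
rewrite nth_set_nth /= eqxx.
set A := Ebern qs _; set B := Ebern qs _; set q := nth 0 qs j.
have BA : B <= A by apply: ler_Ebern.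
have q0 : 0 <= q by have /andP[] := allP qs_ok q (mem_nth 0 hj).
rewrite -subr_ge0.
have -> : (q + r) * A + (1 - (q + r)) * B - (r * A + (1 - r) * (q * A + (1 - q) * B))
  = r * q * (A - B) by ring.
by rewrite !mulr_ge0 // subr_ge0.
Qed.

Lemma bit_monotone_set G j : bit_monotone G ->
  bit_monotone (fun bs => G (set_nth false bs j true)).
Proof.
move=> Gmono bs i /=; rewrite !(set_set_nth false bs i _ j true).
by case: eqP => _; [exact: lexx | exact: Gmono].
Qed.

Fixpoint push_open (phs : seq nat) bs v : seq bool :=
  match phs, bs with
  | j :: phs', b :: bs' =>
      let w := push_open phs' bs' v in if b then set_nth false w j true else w
  | _, _ => v
  end.

Fixpoint raise_probs p (phs : seq nat) qs : seq R :=
  if phs is j :: phs' then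
    let Q := raise_probs p phs' qs in set_nth 0 Q j (nth 0 Q j + p)
  else qs.

Lemma push_open_hit phs bs v i : (i < size phs)%N -> nth false bs i ->
  nth false (push_open phs bs v) (nth 0%N phs i).
Proof.
elim: phs bs i => [|j phs IH] [|b bs] [|i] //= hi hb.
  by rewrite hb nth_set_nth /= eqxx.
case: b; last exact: IH.
by rewrite nth_set_nth /=; case: eqP => // _; apply: IH.
Qed.

Lemma size_raise_probs p phs qs : all (gtn (size qs)) phs ->
  size (raise_probs p phs qs) = size qs.
Proof.
elim: phs => [|j phs IH] //= /andP[hj hall].
by rewrite size_set_nth IH //; apply/maxn_idPr.
Qed.

Lemma nth_raise_probs p phs qs j : all (gtn (size qs)) phs ->
  nth 0 (raise_probs p phs qs) j = nth 0 qs j + (count_mem j phs)%:R * p.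
Proof.
elim: phs => [|k phs IH] /=; first by rewrite mul0r addr0.
move=> /andP[hk hall]; rewrite nth_set_nth /= IH //.
case: eqP => [<-|ne]; first by rewrite IH // eqxx natrD mulrDl mul1r addrAC addrA.
by case: eqP => // e; case: ne.
Qed.

Definition raise_ok p (phs : seq nat) qs :=
  forall j, (j < size qs)%N ->
    0 <= nth 0 qs j /\ nth 0 qs j + (count_mem j phs)%:R * p <= 1.

Lemma raise_ok_behead p j phs qs : 0 <= p ->
  raise_ok p (j :: phs) qs -> raise_ok p phs qs.
Proof.
move=> p0 ok i /ok[q0 q1]; split => //; apply: le_trans q1.
by rewrite lerD2l ler_wpM2r // ler_nat leq_addl.
Qed.

Lemma probs_raise p phs qs : 0 <= p -> all (gtn (size qs)) phs ->
  raise_ok p phs qs -> probs (raise_probs p phs qs).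
Proof.
move=> p0 hall ok; apply/(all_nthP 0) => j; rewrite size_raise_probs // => /ok[q0 q1].
by rewrite nth_raise_probs // q1 addr_ge0 ?mulr_ge0.
Qed.

Lemma raise_ok_probs p phs qs : 0 <= p -> raise_ok p phs qs -> probs qs.
Proof.
move=> p0 ok; apply/(all_nthP 0) => j /ok[q0 q1]; rewrite q0 /=.
by apply: le_trans q1; rewrite lerDl mulr_ge0.
Qed.

Lemma Ebern_push_open p phs qs G : 0 <= p -> all (gtn (size qs)) phs ->
  raise_ok p phs qs -> bit_monotone G ->
  Ebern (nseq (size phs) p) (fun bs => Ebern qs (fun v => G (push_open phs bs v))) <=
  Ebern (raise_probs p phs qs) G.
Proof.
move=> p0; elim: phs G => [|j phs IH] G /=; first by move=> *; exact: lexx.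
move=> /andP[hj hall] ok Gmono.
have ok' := raise_ok_behead p0 ok.
have p1 : 0 <= 1 - p.
  have [q0 q1] := ok j hj; move: q1; rewrite /= eqxx natrD mulrDl mul1r.
  have : 0 <= (count_mem j phs)%:R * p by rewrite mulr_ge0.
  lra.
apply: le_trans (Ebern_raise (probs_raise p0 hall ok') Gmono _ p0).
  apply: lerD; apply: ler_wpM2l => //; first exact: IH (bit_monotone_set j Gmono).
  exact: IH.
by rewrite size_raise_probs.
Qed.

Definition ffun_of_bits n bs : {ffun 'I_n -> bool} := [ffun i : 'I_n => nth false bs i].

Definition ffcons n (b : bool) (w : {ffun 'I_n -> bool}) : {ffun 'I_n.+1 -> bool} :=
  [ffun i => if unlift ord0 i is Some j then w j else b].

Lemma ffcons_bij n :
  bijective (fun bw : bool * {ffun 'I_n -> bool} => ffcons bw.1 bw.2).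
Proof.
exists (fun w : {ffun 'I_n.+1 -> bool} => (w ord0, [ffun j : 'I_n => w (lift ord0 j)])).
  case=> b w; rewrite /ffcons /= ffunE unlift_none; congr (_, _).
  by apply/ffunP => j; rewrite !ffunE liftK.
move=> w; apply/ffunP => i; rewrite /ffcons /= ffunE.
by case: unliftP => [j ->|->]; rewrite ?ffunE.
Qed.

Lemma ffcons_of_bits n b bs :
  ffcons b (ffun_of_bits n bs) = ffun_of_bits n.+1 (b :: bs).
Proof.
apply/ffunP => i; rewrite !ffunE.
by case: unliftP => [j ->|->]; rewrite ?ffunE //= lift0.
Qed.

Lemma sum_ffun_Ebern p n (F : {ffun 'I_n -> bool} -> R) :
  \sum_(w : {ffun 'I_n -> bool}) (\prod_(i < n) (if w i then p else 1 - p)) * F w =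
  Ebern (nseq n p) (fun bs => F (ffun_of_bits n bs)).
Proof.
elim: n F => [|n IH] F.
  rewrite /= (big_pred1 (ffun_of_bits 0 [::])) ?big_ord0 ?mul1r //.
  by move=> w; apply/esym/eqP/ffunP => -[].
rewrite (reindex _ (onW_bij _ (@ffcons_bij n))) /=.
rewrite -(pair_bigA _ (fun b w =>
  (\prod_(i < n.+1) (if ffcons b w i then p else 1 - p)) * F (ffcons b w))) big_bool.
have step b : \sum_(w : {ffun 'I_n -> bool})
    (\prod_(i < n.+1) (if ffcons b w i then p else 1 - p)) * F (ffcons b w) =
    (if b then p else 1 - p) *
    Ebern (nseq n p) (fun bs => F (ffun_of_bits n.+1 (b :: bs))).
  under eq_Ebern do rewrite -ffcons_of_bits.
  rewrite -(IH (fun w => F (ffcons b w))) big_distrr /=.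
  apply: eq_bigr => w _; rewrite big_ord_recl /ffcons !ffunE unlift_none mulrA.
  by congr (_ * _ * _); apply: eq_bigr => i _; rewrite ffunE liftK.
by rewrite !step.
Qed.

End BernoulliMean.

Section Percolation.
Variables (R : realType) (V : eqType).
Implicit Types (es : seq (V * V)) (a b : V) (p : R) (bs : seq bool).

Lemma open_conn_mono es (w1 w2 : {ffun 'I_(size es) -> bool}) a b :
  (forall i, w1 i -> w2 i) -> open_conn w1 a b -> open_conn w2 a b.
Proof.
move=> w12; elim=> [x y [i [wi ei]] | x | x y z _ IH1 _ IH2].
- by apply: rt_step; exists i; split => //; apply: w12.
- exact: rt_refl.
- exact: rt_trans IH1 IH2.
Qed.

Definition conn_ind es a b bs : R :=
  if `[< open_conn (ffun_of_bits (size es) bs) a b >] then 1 else 0.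

Lemma conn_prob_Ebern p es a b :
  conn_prob p es a b = Ebern (nseq (size es) p) (conn_ind es a b).
Proof. exact: sum_ffun_Ebern. Qed.

Lemma conn_ind_monotone es a b : bit_monotone (conn_ind es a b).
Proof.
move=> bs j; rewrite /conn_ind.
case: (asboolP (open_conn _ a b)) => [conn|]; last by case: asboolP.
rewrite asboolT //; apply: open_conn_mono conn => i; rewrite !ffunE !nth_set_nth /=.
by case: eqP.
Qed.

Lemma conn_prob0 es a b : a <> b -> conn_prob (0 : R) es a b = 0.
Proof.
move=> ab; rewrite conn_prob_Ebern Ebern_nseq0 /conn_ind asboolF // => conn.
apply: ab; elim: conn => [x y [i [wi _]] | x | x y z _ -> _ ->] //.
by move: wi; rewrite ffunE nth_nseq if_same.
Qed.

Lemma conn_prob_ge0 p es a b : 0 <= p <= 1 -> 0 <= conn_prob p es a b.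
Proof.
move=> hp; rewrite conn_prob_Ebern -(Ebern_cst (nseq (size es) p) 0).
apply: ler_Ebern => [|bs]; first by apply/allP => q /nseqP[->].
by rewrite /conn_ind; case: ifP.
Qed.

End Percolation.

Section Edges.
Variable T : eqType.
Implicit Types (es : seq (T * T)) (e : T * T).

Definition same_edge e e' : bool := (e' == e) || (e' == (e.2, e.1)).
Definition has_edge es e : bool := (e \in es) || ((e.2, e.1) \in es).
Definition edge_index es e : nat :=
  if e \in es then index e es else index (e.2, e.1) es.

Lemma edge_index_lt es e : has_edge es e -> (edge_index es e < size es)%N.
Proof. by rewrite /has_edge /edge_index; case: ifP => [ein _|_ /= ein]; rewrite index_mem. Qed.

Lemma same_edge_edge_index es e d :
  has_edge es e -> same_edge (nth d es (edge_index es e)) e.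
Proof.
rewrite /has_edge /edge_index /same_edge.
case: ifP => [ein _|_ /= ein]; rewrite nth_index //= ?eqxx //.
by rewrite -surjective_pairing eqxx orbT.
Qed.

Lemma has_edge_swap es e : has_edge es (e.2, e.1) = has_edge es e.
Proof. by rewrite /has_edge orbC -surjective_pairing. Qed.

Lemma has_edge_dedup es e : e \in es -> has_edge (dedup_edges es) e.
Proof.
elim: es e => [|e0 es IH] e //; rewrite inE => ein /=.
case: ifP => [/orP h0|_].
  case/orP: ein => [/eqP ->|/IH //].
  by case: h0 => [/IH //|/IH]; rewrite has_edge_swap.
case/orP: ein => [/eqP ->|/IH]; rewrite /has_edge !inE ?eqxx //.
by case/orP => ->; rewrite !orbT.
Qed.

End Edges.

Section EdgeMap.
Variables (R : realType) (V W : eqType) (f : V -> W).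

Definition edge_img (e : V * V) : W * W := (f e.1, f e.2).

Lemma same_edge_img e2 e x y : same_edge e2 (edge_img e) ->
  e = (x, y) \/ e = (y, x) -> e2 = (f x, f y) \/ e2 = (f y, f x).
Proof.
case: e2 => u v /orP[] /eqP [<- <-] [] ->; by [left | right].
Qed.

Variables (es1 : seq (V * V)) (es2 : seq (W * W)).
Hypothesis img_edge : {in es1, forall e, has_edge es2 (edge_img e)}.

Let phs := map (edge_index es2 \o edge_img) es1.

Lemma open_conn_image bs v a b :
  open_conn (ffun_of_bits (size es1) bs) a b ->
  open_conn (ffun_of_bits (size es2) (push_open phs bs v)) (f a) (f b).
Proof.
elim=> [x y [i [wi ei]] | x | x y z _ IH1 _ IH2]; last 2 first.
- exact: rt_refl.
- exact: rt_trans IH1 IH2.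
set e := edge_at i; have ein : e \in es1 by apply: mem_tnth.
have ej := edge_index_lt (img_edge ein).
apply: rt_step; exists (Ordinal ej); split.
  rewrite ffunE /=.
  have -> : edge_index es2 (edge_img e) = nth 0%N phs i.
    by rewrite (nth_map e) // /e /edge_at [in LHS](tnth_nth e).
  by rewrite push_open_hit ?size_map //; move: wi; rewrite ffunE.
apply: same_edge_img ei.
by rewrite /edge_at (tnth_nth (edge_img e)); apply: same_edge_edge_index; apply: img_edge.
Qed.

Lemma count_edge_index_le d j : (j < size es2)%N ->
  (count_mem j phs <= count (fun e => same_edge (nth d es2 j) (edge_img e)) es1)%N.
Proof.
move=> hj; rewrite count_map.
rewrite -(eq_in_count (a1 := fun e => (edge_index es2 (edge_img e) == j) &&
                                     same_edge (nth d es2 j) (edge_img e))).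
  by apply: sub_count => e /andP[].
by move=> e /img_edge he /=; case: eqP => // <-; rewrite same_edge_edge_index.
Qed.

(* An edge of [es2] is opened when one of its (at most [k]) preimages is open,
   and is otherwise opened independently with the missing probability. *)
Lemma conn_prob_le_edge_map (k : nat) (p p' : R) a b : (0 < k)%N ->
  (forall e2, count (fun e => same_edge e2 (edge_img e)) es1 <= k)%N ->
  0 <= p -> k%:R * p <= p' <= 1 ->
  conn_prob p es1 a b <= conn_prob p' es2 (f a) (f b).
Proof.
move=> k_gt0 fiber p0 /andP[kp p'1].
set qs := [seq p' - (count_mem j phs)%:R * p | j <- iota 0 (size es2)].
have size_qs : size qs = size es2 by rewrite size_map size_iota.
have nth_qs j : (j < size es2)%N -> nth 0 qs j = p' - (count_mem j phs)%:R * p.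
  by move=> hj; rewrite (nth_map 0%N) ?size_iota // nth_iota.
have phs_lt : all (gtn (size qs)) phs.
  by apply/allP => _ /mapP[e /img_edge he ->] /=; rewrite size_qs edge_index_lt.
have ok : raise_ok p phs qs.
  move=> j; rewrite size_qs => hj; rewrite nth_qs // subrK; split => //.
  rewrite subr_ge0 (le_trans _ kp) // ler_wpM2r // ler_nat.
  exact: leq_trans (count_edge_index_le (f a, f a) hj) (fiber _).
have raised : raise_probs p phs qs = nseq (size es2) p'.
  apply: (@eq_from_nth _ 0); first by rewrite size_raise_probs // size_nseq.
  move=> j; rewrite size_raise_probs // size_qs => hj.
  by rewrite nth_raise_probs // nth_qs // nth_nseq hj subrK.
rewrite !conn_prob_Ebern -raised.
apply: le_trans (Ebern_push_open p0 phs_lt ok (@conn_ind_monotone R _ es2 (f a) (f b))).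
rewrite size_map; apply: ler_Ebern => [|bs].
  apply/allP => q /nseqP[-> _]; rewrite p0 (le_trans _ p'1) // (le_trans _ kp) //.
  by rewrite ler_peMl // ler1n.
rewrite -(Ebern_cst qs (conn_ind R es1 a b bs)).
apply: ler_Ebern => [|v]; first exact: raise_ok_probs ok.
rewrite /conn_ind; case: asboolP => [conn|_]; last by case: ifP.
by rewrite asboolT //; apply: open_conn_image.
Qed.

End EdgeMap.

Section CriticalParameter.
Import numFieldNormedType.Exports.
Local Open Scope classical_set_scope.
Variable R : realType.

Definition subcritical (V : eqType) (E : nat -> seq (V * V)) (a b : V) : set R :=
  [set p | (0 <= p <= 1) /\ ((fun n => conn_prob p (E n) a b) @ \oo --> (0 : R))].

Lemma crit_paramE (V : eqType) (E : nat -> seq (V * V)) a b :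
  crit_param R E a b = sup (subcritical E a b).
Proof. by []. Qed.

Lemma subcritical_sup (V : eqType) (E : nat -> seq (V * V)) a b : a <> b ->
  has_sup (subcritical E a b) /\ 0 <= sup (subcritical E a b).
Proof.
move=> ab; set A := subcritical E a b.
have A0 : A 0.
  split; first by rewrite lexx ler01.
  by under eq_fun do rewrite conn_prob0 //; apply: cvg_cst.
have ub : ubound A 1 by move=> x [/andP[_ ->]].
have hs : has_sup A by split; [exists 0 | exists 1].
by split => //; apply: sup_upper_bound.
Qed.

Lemma crit_param_le_scale (V W : eqType) (E1 : nat -> seq (V * V))
    (E2 : nat -> seq (W * W)) a b a' b' (c : R) :
  a <> b -> a' <> b' -> 1 <= c ->
  (forall n p p', 0 <= p -> c * p <= p' <= 1 ->
     conn_prob p (E1 n) a b <= conn_prob p' (E2 n) a' b') ->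
  crit_param R E2 a' b' / c <= crit_param R E1 a b.
Proof.
move=> ab ab' c1 dom.
have [hs1 ge1] := subcritical_sup E1 ab.
have [hs2 _] := subcritical_sup E2 ab'.
rewrite !crit_paramE.
set s1 := sup _ in hs1 ge1 *; set s2 := sup _ in hs2 *.
rewrite leNgt; apply/negP => lt12.
have c0 : 0 < c by apply: lt_le_trans c1.
set t := s2 / c in lt12.
have ct : c * t = s2 by rewrite mulrC divfK ?gt_eqF.
set p := (s1 + t) / 2.
have p0 : 0 <= p by rewrite /p; lra.
have s1p : s1 < p by rewrite /p; lra.
have cps2 : 0 < s2 - c * p by rewrite /p -ct; nra.
have [p' [/andP[_ p'1] cvgT] ltp'] := sup_adherent cps2 hs2.
have cpp' : c * p <= p' by move: ltp'; rewrite opprB addrC subrK => /ltW.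
have p1 : p <= 1 by rewrite (le_trans _ p'1) // (le_trans _ cpp') // ler_peMl.
suff : subcritical E1 a b p by move=> /(sup_upper_bound hs1); rewrite leNgt s1p.
split; first by rewrite p0 p1.
apply: (@squeeze_cvgr _ _ _ _ (fun _ => 0) (fun n => conn_prob p' (E2 n) a' b')) => //.
- apply: nearW => n; apply/andP; split; first by rewrite conn_prob_ge0 // p0 p1.
  by apply: dom; rewrite ?cpp'.
- exact: cvg_cst.
Qed.

End CriticalParameter.

Definition comb (a b c : rat) (x y z : pt) : pt :=
  (a * x.1.1 + b * y.1.1 + c * z.1.1, a * x.1.2 + b * y.1.2 + c * z.1.2,
   a * x.2 + b * y.2 + c * z.2).

Definition det3 (x y z : pt) : rat :=
  x.1.1 * (y.1.2 * z.2 - y.2 * z.1.2) - x.1.2 * (y.1.1 * z.2 - y.2 * z.1.1)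
  + x.2 * (y.1.1 * z.1.2 - y.1.2 * z.1.1).

(* Open cones rather than open triangles: all points of [T_n] lie on the plane
   [x + y + z = 1], where the two notions agree. *)
Definition in_cone (P x y z : pt) : Prop :=
  exists a b c, [/\ 0 < a, 0 < b, 0 < c & P = comb a b c x y z].

Definition inside (P : pt) (t : pt * pt * pt) : Prop :=
  let: (x, y, z) := t in in_cone P x y z.

Definition nondeg (t : pt * pt * pt) : bool :=
  let: (x, y, z) := t in det3 x y z != 0.

Definition disjoint_faces (t1 t2 : pt * pt * pt) : bool :=
  `[< forall P, inside P t1 -> ~ inside P t2 >].

Lemma pt_eq (a b : pt) : a.1.1 = b.1.1 -> a.1.2 = b.1.2 -> a.2 = b.2 -> a = b.
Proof. by case: a => [[? ?] ?]; case: b => [[? ?] ?] /= -> -> ->. Qed.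

Lemma det3_combl a b c x y z : det3 (comb a b c x y z) y z = a * det3 x y z.
Proof. by rewrite /det3 /comb /=; ring. Qed.
Lemma det3_combm a b c x y z : det3 x (comb a b c x y z) z = b * det3 x y z.
Proof. by rewrite /det3 /comb /=; ring. Qed.
Lemma det3_combr a b c x y z : det3 x y (comb a b c x y z) = c * det3 x y z.
Proof. by rewrite /det3 /comb /=; ring. Qed.

Lemma comb_inj x y z a b c a' b' c' : det3 x y z != 0 ->
  comb a b c x y z = comb a' b' c' x y z -> [/\ a = a', b = b' & c = c'].
Proof.
move=> D0 e; have cancel := mulIf D0.
split; apply: cancel.
- by rewrite -(det3_combl a b c) -(det3_combl a' b' c') e.
- by rewrite -(det3_combm a b c) -(det3_combm a' b' c') e.
- by rewrite -(det3_combr a b c) -(det3_combr a' b' c') e.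
Qed.

Lemma det3_swap x y z : det3 y x z = - det3 x y z. Proof. by rewrite /det3; ring. Qed.
Lemma det3_swap23 x y z : det3 x z y = - det3 x y z. Proof. by rewrite /det3; ring. Qed.
Lemma det3_rot x y z : det3 y z x = det3 x y z. Proof. by rewrite /det3; ring. Qed.
Lemma det3_eq12 x z : det3 x x z = 0. Proof. by rewrite /det3; ring. Qed.

Lemma in_cone_swap P x y z : in_cone P x y z -> in_cone P y x z.
Proof.
move=> [a [b [c [ha hb hc ->]]]]; exists b, a, c; split => //.
by apply: pt_eq; rewrite /comb /=; ring.
Qed.

Lemma in_cone_rot P x y z : in_cone P x y z -> in_cone P y z x.
Proof.
move=> [a [b [c [ha hb hc ->]]]]; exists b, c, a; split => //.
by apply: pt_eq; rewrite /comb /=; ring.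
Qed.

(* In barycentric coordinates [(A, B, C)] relative to the parent, the open
   [k]-th child of [bsubdiv] is the chamber where the coordinates are
   strictly ordered in the [k]-th way. *)
Definition chamber (k : nat) (A B C : rat) : Prop :=
  match k with
  | 0 => C < B < A
  | 1 => C < A < B
  | 2 => A < C < B
  | 3 => A < B < C
  | 4 => B < A < C
  | _ => B < C < A
  end.

Lemma inside_child x y z k P : (k < 6)%N ->
  inside P (nth (x, y, z) (bsubdiv (x, y, z)) k) ->
  exists A B C, [/\ 0 < A, 0 < B, 0 < C, P = comb A B C x y z & chamber k A B C].
Proof.
case: k => [|[|[|[|[|[|k]]]]]] // _ /= [a [b [c [ha hb hc ->]]]].
- exists (a + b / 2 + c / 3), (b / 2 + c / 3), (c / 3).
  by split; [lra | lra | lra | apply: pt_eq; rewrite /comb /midpt /bary /=; ring | lra].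
- exists (a / 2 + c / 3), (a / 2 + b + c / 3), (c / 3).
  by split; [lra | lra | lra | apply: pt_eq; rewrite /comb /midpt /bary /=; ring | lra].
- exists (c / 3), (a + b / 2 + c / 3), (b / 2 + c / 3).
  by split; [lra | lra | lra | apply: pt_eq; rewrite /comb /midpt /bary /=; ring | lra].
- exists (c / 3), (a / 2 + c / 3), (a / 2 + b + c / 3).
  by split; [lra | lra | lra | apply: pt_eq; rewrite /comb /midpt /bary /=; ring | lra].
- exists (b / 2 + c / 3), (c / 3), (a + b / 2 + c / 3).
  by split; [lra | lra | lra | apply: pt_eq; rewrite /comb /midpt /bary /=; ring | lra].
- exists (a / 2 + b + c / 3), (c / 3), (a / 2 + c / 3).
  by split; [lra | lra | lra | apply: pt_eq; rewrite /comb /midpt /bary /=; ring | lra].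
Qed.

Lemma chamber_inj k1 k2 A B C : (k1 < 6)%N -> (k2 < 6)%N ->
  chamber k1 A B C -> chamber k2 A B C -> k1 = k2.
Proof.
case: k1 => [|[|[|[|[|[|k1]]]]]] //; case: k2 => [|[|[|[|[|[|k2]]]]]] //= _ _;
  move=> /andP[h1 h2] /andP[h3 h4]; first [reflexivity | exfalso; lra].
Qed.

Lemma det3_child x y z k : (k < 6)%N ->
  let: (x', y', z') := nth (x, y, z) (bsubdiv (x, y, z)) k in
  6 * det3 x' y' z' = det3 x y z.
Proof.
by case: k => [|[|[|[|[|[|k]]]]]] //= _; rewrite /det3 /midpt /bary /=; field.
Qed.

Lemma bsubdiv_nth t c : c \in bsubdiv t -> exists2 k, (k < 6)%N & c = nth t (bsubdiv t) k.
Proof.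
move=> cin; exists (index c (bsubdiv t)); last by rewrite nth_index.
by rewrite -index_mem in cin; case: t cin => [[x y] z].
Qed.

Lemma nondeg_child t c : nondeg t -> c \in bsubdiv t -> nondeg c.
Proof.
case: t => [[x y] z] D0 /bsubdiv_nth [k /(det3_child x y z)].
case: (nth _ _ k) => [[x' y'] z'] e ->; rewrite /nondeg -e in D0.
by apply: contraNneq D0 => ->; rewrite mulr0.
Qed.

Lemma inside_parent t c P : c \in bsubdiv t -> inside P c -> inside P t.
Proof.
case: t => [[x y] z] /bsubdiv_nth [k hk ->] /(inside_child hk) [A [B [C [hA hB hC eP _]]]].
by exists A, B, C.
Qed.

Lemma pairwise_disjoint_bsubdiv t : nondeg t -> pairwise disjoint_faces (bsubdiv t).
Proof.
case: t => [[x y] z] D0; apply/(pairwiseP (x, y, z)) => k1 k2 h1 h2 k12.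
apply/asboolP => P /(inside_child h1) [A [B [C [_ _ _ eP c1]]]].
move=> /(inside_child h2) [A' [B' [C' [_ _ _ eP' c2]]]].
have [eA eB eC] := comb_inj D0 (etrans (esym eP) eP'); subst A' B' C'.
by move: k12; rewrite (chamber_inj h1 h2 c1 c2) ltnn.
Qed.

Lemma subdiv_faces_ok F : pairwise disjoint_faces F -> all nondeg F ->
  pairwise disjoint_faces (flatten (map bsubdiv F)) /\
  all nondeg (flatten (map bsubdiv F)).
Proof.
elim: F => [|t F IH] //= /andP[tF pwF] /andP[nt nF].
have [IH1 IH2] := IH pwF nF; rewrite pairwise_cat all_cat IH1 IH2.
rewrite pairwise_disjoint_bsubdiv // !andbT; split; last first.
  by apply/allP => c; apply: nondeg_child.
apply/allrelP => c c' cin /flatten_mapP [t' t'in c'in].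
apply/asboolP => P /(inside_parent cin) Pt /(inside_parent c'in).
by move: (allP tF t' t'in) => /asboolP; apply.
Qed.

Lemma T_faces_ok n : pairwise disjoint_faces (T_faces n) /\ all nondeg (T_faces n).
Proof.
elim: n => [|n [pw nd]]; first by rewrite /= /det3 /ptT0 /ptT1 /ptT2.
by rewrite /T_faces iterS -/(T_faces n); apply: subdiv_faces_ok.
Qed.

Definition has_side (f : pt * pt) (t : pt * pt * pt) : bool :=
  has (same_edge f) (tri_sides t).

Lemma same_edge_ends (f e e' : pt * pt) : same_edge f e -> same_edge f e' ->
  e = e' \/ e = (e'.2, e'.1).
Proof.
case: f e e' => u v [a b] [c d]; rewrite /same_edge /=.
by move=> /orP[] /eqP [-> ->] /orP[] /eqP [-> ->]; [left | right | right | left].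
Qed.

Lemma count_sides_le1 f t : nondeg t -> (count (same_edge f) (tri_sides t) <= 1)%N.
Proof.
case: t => [[x y] z] /= D0.
have nxy : x <> y by move=> e; move: D0; rewrite e det3_eq12 eqxx.
have nyz : y <> z by move=> e; move: D0; rewrite -det3_rot e det3_eq12 eqxx.
have nzx : z <> x by move=> e; move: D0; rewrite det3_rot e det3_eq12 eqxx.
case h1: (same_edge f (x, y)); case h2: (same_edge f (y, z));
  case h3: (same_edge f (z, x)) => //=.
- by case: (same_edge_ends h1 h2) => -[] e; exfalso; congruence.
- by case: (same_edge_ends h1 h2) => -[] e; exfalso; congruence.
- by case: (same_edge_ends h1 h3) => -[] e; exfalso; congruence.
- by case: (same_edge_ends h2 h3) => -[] e; exfalso; congruence.
Qed.

Lemma side_cone f t : nondeg t -> has_side f t ->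
  exists w, det3 f.1 f.2 w != 0 /\ forall P, in_cone P f.1 f.2 w -> inside P t.
Proof.
case: f => u v; case: t => [[x y] z] /= D0; rewrite /has_side /same_edge /=.
case: eqP => [[<- <-] _|_]; first by exists z; split => // P.
case: eqP => [[<- <-] _|_].
  by exists z; rewrite det3_swap oppr_eq0; split=> // P /in_cone_swap.
case: eqP => [[<- <-] _|_].
  by exists x; rewrite det3_rot; split=> // P /in_cone_rot /in_cone_rot.
case: eqP => [[<- <-] _|_].
  exists x; rewrite det3_swap oppr_eq0 det3_rot.
  by split=> // P /in_cone_swap /in_cone_rot /in_cone_rot.
case: eqP => [[<- <-] _|_].
  by exists y; rewrite 2!det3_rot; split=> // P /in_cone_rot.
case: eqP => [[<- <-] _|_] //.
by exists y; rewrite det3_swap23 oppr_eq0; split=> // P /in_cone_swap /in_cone_rot.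
Qed.

(* If [w1] and [w2] lie on the same side of the line [uv], then
   [w2 = a u + b v + c w1] with [c > 0], and [K u + K v + w2] lies in both
   cones as soon as [K] exceeds [|a|] and [|b|]. *)
Lemma cone_meet u v w1 w2 : 0 < det3 u v w1 * det3 u v w2 ->
  exists P, in_cone P u v w1 /\ in_cone P u v w2.
Proof.
move=> same_side; set D1 := det3 u v w1 in same_side; set D2 := det3 u v w2 in same_side.
have D1n0 : D1 != 0 by apply: contraTneq same_side => ->; rewrite mul0r ltxx.
set a := det3 w2 v w1 / D1; set b := det3 u w2 w1 / D1; set c := D2 / D1.
have w2E : w2 = comb a b c u v w1.
  by apply: pt_eq; rewrite /comb /a /b /c /D1 /D2 /det3 /=; field; exact: D1n0.
have c0 : 0 < c.
  have cD : c * (D1 * D1) = D1 * D2 by rewrite /c mulrA divfK // mulrC.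
  have : 0 < D1 * D1 by rewrite -expr2 exprn_even_gt0.
  nra.
set K := 1 + `|a| + `|b|.
have na := ler_norm (- a); have nb := ler_norm (- b); rewrite !normrN in na nb.
have := normr_ge0 a; have := normr_ge0 b => a0 b0.
have Ka : 0 < K + a by rewrite /K; lra.
have Kb : 0 < K + b by rewrite /K; lra.
exists (comb K K 1 u v w2); split; last by exists K, K, 1; split; rewrite /K.
exists (K + a), (K + b), c; split => //.
by rewrite w2E; apply: pt_eq; rewrite /comb /=; ring.
Qed.

(* The three products multiply to the positive square [(s1 s2 s3)^2]. *)
Lemma pos_mul_pair (s1 s2 s3 : rat) : s1 != 0 -> s2 != 0 -> s3 != 0 ->
  [|| 0 < s1 * s2, 0 < s1 * s3 | 0 < s2 * s3].
Proof.
move=> n1 n2 n3; apply/negPn/negP; rewrite !negb_or -!leNgt => /and3P[h12 h13 h23].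
have : 0 < (s1 * s2) * (s1 * s3) * (s2 * s3).
  have -> : (s1 * s2) * (s1 * s3) * (s2 * s3) = (s1 * s2 * s3) ^+ 2 by ring.
  by rewrite exprn_even_gt0 // !mulf_neq0.
have := mulr_le0 h12 h13; nra.
Qed.

Lemma no_three_faces f t1 t2 t3 :
  nondeg t1 -> nondeg t2 -> nondeg t3 ->
  has_side f t1 -> has_side f t2 -> has_side f t3 ->
  disjoint_faces t1 t2 -> disjoint_faces t1 t3 -> disjoint_faces t2 t3 -> False.
Proof.
move=> n1 n2 n3 /(side_cone n1) [w1 [d1 i1]] /(side_cone n2) [w2 [d2 i2]].
move=> /(side_cone n3) [w3 [d3 i3]] /asboolP D12 /asboolP D13 /asboolP D23.
case/or3P: (pos_mul_pair d1 d2 d3) => /cone_meet [P [h h']].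
- exact: D12 P (i1 _ h) (i2 _ h').
- exact: D13 P (i1 _ h) (i3 _ h').
- exact: D23 P (i2 _ h) (i3 _ h').
Qed.

Lemma count_has_side_le2 f F : pairwise disjoint_faces F -> all nondeg F ->
  (count (has_side f) F <= 2)%N.
Proof.
move=> /(pairwise_filter (has_side f)) pw nd; rewrite -size_filter.
have nd' : all nondeg [seq t <- F | has_side f t].
  by apply/allP => t; rewrite mem_filter => /andP[_ /(allP nd)].
have sd : all (has_side f) [seq t <- F | has_side f t].
  by apply/allP => t; rewrite mem_filter => /andP[].
move: pw nd' sd; case: [seq t <- F | has_side f t] => [|t1 [|t2 [|t3 G]]] //=.
move=> /and3P[/and3P[d12 d13 _] /andP[d23 _] _] /and4P[n1 n2 n3 _] /and4P[s1 s2 s3 _].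
by case: (no_three_faces n1 n2 n3 s1 s2 s3 d12 d13 d23).
Qed.

Lemma count_sides_le f F : all nondeg F ->
  (count (same_edge f) (flatten (map (@tri_sides pt) F)) <= count (has_side f) F)%N.
Proof.
elim: F => [|t F IH] //= /andP[nt nF]; rewrite count_cat leq_add ?IH //.
case ht: (has_side f t); first exact: count_sides_le1.
by move: ht; rewrite /has_side has_count lt0n => /negbFE/eqP ->.
Qed.

Definition T_sides (n : nat) : seq (pt * pt) := flatten (map (@tri_sides pt) (T_faces n)).

Lemma count_T_sides_le2 n f : (count (same_edge f) (T_sides n) <= 2)%N.
Proof.
have [pw nd] := T_faces_ok n.
exact: leq_trans (count_sides_le f nd) (count_has_side_le2 f pw nd).
Qed.

Definition addr_face (w : seq nat) : pt * pt * pt :=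
  foldl (fun t d => nth t (bsubdiv t) d) (ptT0, ptT1, ptT2) w.

Definition svert_pt (s : svert) : pt :=
  match s with
  | inl k => nth ptT0 [:: ptT0; ptT1; ptT2] k
  | inr (w, k) => let: (x, y, z) := addr_face w in
      nth (bary x y z) [:: midpt x y; midpt y z; midpt z x] k
  end.
Arguments svert_pt : simpl never.

Definition stri_pt (t : svert * svert * svert) : pt * pt * pt :=
  let: (x, y, z) := t in (svert_pt x, svert_pt y, svert_pt z).

Lemma addr_face_rcons w d : addr_face (rcons w d) = nth (addr_face w) (bsubdiv (addr_face w)) d.
Proof. by rewrite /addr_face foldl_rcons. Qed.

Lemma stri_pt_ssubdiv (t : stri) : stri_pt t.2 = addr_face t.1 ->
  map (stri_pt \o snd) (ssubdiv t) = bsubdiv (stri_pt t.2) /\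
  {in ssubdiv t, forall t', stri_pt t'.2 = addr_face t'.1}.
Proof.
case: t => w [[x y] z] /= e.
have ex : svert_pt (inr (w, 0%N)) = midpt (svert_pt x) (svert_pt y) by rewrite /svert_pt -e.
have ey : svert_pt (inr (w, 1%N)) = midpt (svert_pt y) (svert_pt z) by rewrite /svert_pt -e.
have ez : svert_pt (inr (w, 2%N)) = midpt (svert_pt z) (svert_pt x) by rewrite /svert_pt -e.
have ec : svert_pt (inr (w, 3%N)) = bary (svert_pt x) (svert_pt y) (svert_pt z) by rewrite /svert_pt -e.
split; first by rewrite /= ex ey ez ec.
move=> t'; rewrite !inE =>
  /orP[/eqP->|/orP[/eqP->|/orP[/eqP->|/orP[/eqP->|/orP[/eqP->|/eqP->]]]]] /=;
  by rewrite addr_face_rcons -e /= ?ex ?ey ?ez ?ec.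
Qed.

Lemma stri_pt_S_tris n : map (stri_pt \o snd) (S_tris n) = T_faces n /\
  {in S_tris n, forall t, stri_pt t.2 = addr_face t.1}.
Proof.
elim: n => [|n [IH1 IH2]]; first by split => // t; rewrite inE => /eqP ->.
rewrite /S_tris /T_faces !iterS -/(S_tris n) -/(T_faces n); split.
  rewrite map_flatten -map_comp -IH1 -map_comp; congr flatten.
  by apply/eq_in_map => t tin /=; have [-> _] := stri_pt_ssubdiv (IH2 t tin).
by move=> t' /flatten_mapP [t tin t'in]; have [_ ->] := stri_pt_ssubdiv (IH2 t tin).
Qed.

Lemma edge_img_S_edges n : map (edge_img svert_pt) (S_edges n) = T_sides n.
Proof.
rewrite /S_edges /T_sides -(proj1 (stri_pt_S_tris n)) map_flatten -!map_comp.
by congr flatten; apply: eq_map => -[w [[x y] z]].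
Qed.

Lemma conn_prob_S_le_T (R : realType) n (p p' : R) : 0 <= p -> 2 * p <= p' <= 1 ->
  conn_prob p (S_edges n) (inl 0%N : svert) (inl 1%N) <=
  conn_prob p' (T_edges n) ptT0 ptT1.
Proof.
move=> p0 hp'; apply: (@conn_prob_le_edge_map R _ _ svert_pt _ _ _ 2) => //.
- move=> e ein; apply: has_edge_dedup; change (edge_img svert_pt e \in T_sides n).
  by rewrite -edge_img_S_edges map_f.
- by move=> e2; rewrite -(count_map (edge_img svert_pt) (same_edge e2)) edge_img_S_edges count_T_sides_le2.
Qed.

Theorem corollary4p10 (R : realType) : p_T R / 2 <= p_S R.
Proof.
apply: crit_param_le_scale => //; first by rewrite ler1n.
by move=> n p p'; apply: conn_prob_S_le_T.
Qed.
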